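(* Let $m\ge2$ and let $\mathfrak{h}_m$ be the Lie subalgebra of $\Lambda(\mathbb{Q}\mathrm{Tree}_2^-)$ generated by $\bigcup_{j=2}^m\mathrm{Tree}_2((j))$. Then the subspace $\mathbb{Q}\mathrm{Tree}_2^-((0))\oplus\mathbb{Q}\mathrm{Tree}_2^-((1))\oplus\mathfrak{h}_m$ is a Lie subalgebra of $\Lambda(\mathbb{Q}\mathrm{Tree}_2^-)$.
   Context: $\mathrm{Tree}_2((m))$, $m\ge1$, is the set of planar binary rooted trees with one root and $m$ leaves labeled $1,\dots,m$ from left to right, equivalently full parenthesizations of $12\cdots m$; $\mathrm{Tree}_2((1))=\{1\}$, $\mathrm{Tree}_2((2))=\{(12)\}$. Composition $S\circ_iT$ grafts the root of $T$ onto the $i$-th leaf of $S$. For $c\in\mathrm{Tree}_2((m))$, $m\ge2$, $\partial_ic\in\mathrm{Tree}_2((m-1))$ is obtained by erasing the $i$-th leaf (suppressing the resulting one-input vertex). The operad $\mathrm{Tree}_2^-$ has $\mathrm{Tree}_2^-((0))=\{\circ\}$, $\mathrm{Tree}_2^-((m))=\mathrm{Tree}_2((m))$ for $m\ge1$, grafting compositions, and $c\circ_i\circ=\partial_ic$, $1\circ_1\circ=\circ$. $\Lambda(\mathbb{Q}\mathrm{Tree}_2^-)=\bigoplus_{m\ge0}\mathbb{Q}\mathrm{Tree}_2^-((m))$ with Lie bracket $[c,d]=\sum_{t=1}^{j}d\circ_tc-\sum_{s=1}^{k}c\circ_sd$ for $c$ of arity $k$, $d$ of arity $j$. *)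

(* The vector space Lambda(Q Tree_2^-) is modelled as the
   free Q-vector space {malg rat[T2m]} (finitely supported functions
   T2m -> rat, from multinomials' monalg) on the set T2m of basis elements. *)
From HB Require Import structures.
From mathcomp Require Import all_boot all_algebra.
From mathcomp Require Import finmap.
From mathcomp.multinomials Require Import monalg.

Set Implicit Arguments.
Unset Strict Implicit.
Unset Printing Implicit Defensive.

Import GRing.Theory.
Local Open Scope ring_scope.

(* Planar binary rooted trees (leaves are numbered 1..m left to right). *)
Inductive tree : Type := Leaf | Node of tree & tree.

Fixpoint tree_enc (t : tree) : GenTree.tree unit :=
  match t with
  | Leaf => GenTree.Leaf tt
  | Node a b => GenTree.Node 0 [:: tree_enc a; tree_enc b]
  end.

Fixpoint tree_dec (g : GenTree.tree unit) : tree :=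
  match g with
  | GenTree.Node _ (a :: b :: _) => Node (tree_dec a) (tree_dec b)
  | _ => Leaf
  end.

Lemma tree_encK : cancel tree_enc tree_dec.
Proof. by elim=> //= a -> b ->. Qed.

HB.instance Definition _ := Countable.copy tree (can_type tree_encK).

Fixpoint leaves (t : tree) : nat :=
  match t with Leaf => 1%N | Node a b => (leaves a + leaves b)%N end.

(* S o_i T : graft the root of T onto the i-th leaf of S (1-based) *)
Fixpoint graft (Sx : tree) (i : nat) (T : tree) : tree :=
  match Sx with
  | Leaf => if i == 1%N then T else Leaf
  | Node a b =>
      if (i <= leaves a)%N then Node (graft a i T) b
      else Node a (graft b (i - leaves a) T)
  end.

(* partial_i c : erase the i-th leaf and suppress the one-input vertex *)
Fixpoint erase (c : tree) (i : nat) : tree :=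
  match c with
  | Leaf => Leaf
  | Node a b =>
      if (i <= leaves a)%N then
        (if a is Leaf then b else Node (erase a i) b)
      else
        (if b is Leaf then a else Node a (erase b (i - leaves a)))
  end.

(* Tree_2^- : None is the arity-0 element "o", Some t is the tree t *)
Definition T2m := option tree.

Definition ar (x : T2m) : nat :=
  match x with None => 0%N | Some t => leaves t end.

(* operadic composition x o_i y in Tree_2^- (only used for 1 <= i <= ar x) *)
Definition comp (x : T2m) (i : nat) (y : T2m) : T2m :=
  match x, y with
  | Some Sx, Some Tx => Some (graft Sx i Tx)
  | Some c, None => if leaves c == 1%N then None else Some (erase c i)
  | None, _ => None
  end.

Definition LQ := {malg rat[T2m]}.

Definition bv (x : T2m) : LQ := << x >>.

Definition brb (c d : T2m) : LQ :=
  \sum_(1 <= t < (ar d).+1) bv (comp d t c)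
  - \sum_(1 <= s < (ar c).+1) bv (comp c s d).

Definition bracket (f g : LQ) : LQ :=
  \sum_(c <- msupp f) \sum_(d <- msupp g) (f@_c * g@_d) *: brb c d.

Definition lie_subalgebra (P : LQ -> Prop) : Prop :=
  [/\ P 0,
      (forall x y, P x -> P y -> P (x + y)),
      (forall (a : rat) x, P x -> P (a *: x)) &
      (forall x y, P x -> P y -> P (bracket x y))].

Definition lie_generated (S : LQ -> Prop) (x : LQ) : Prop :=
  forall P, lie_subalgebra P -> (forall y, S y -> P y) -> P x.

Definition h_gen (m : nat) : LQ -> Prop :=
  lie_generated (fun y => exists t : tree,
                   (2 <= leaves t <= m)%N /\ y = bv (Some t)).

(* The operators ad 1 and ad o, with 1 the unit tree and o the arity-0 element,
   are derivations of the bracket.  For ad 1 this is because it multiplies a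
   basis element of arity k by k - 1 and arity is additive under composition.
   For ad o, [o, e] is the sum of the leaf erasures of e, and erasing a leaf of
   d o_t c erases either a leaf of c or a leaf of d, so this sum is a
   derivation of the pre-Lie product whose commutator is the bracket.  On a
   generator t of h_m, [1, t] is a multiple of t and [o, t] is a sum of trees
   with one leaf fewer, each a generator or the tree 1; by induction over the
   generation of h_m, [1, h_m] lies in h_m and [o, h_m] in Q o + Q 1 + h_m.
   Together with [o, o] = [1, 1] = 0, [o, 1] = o and antisymmetry this makes
   Q o + Q 1 + h_m closed under the bracket. *)

From Pilot Require Import Defs.
From HB Require Import structures.
From mathcomp Require Import all_boot all_algebra.
From mathcomp Require Import finmap.
From mathcomp.multinomials Require Import monalg.
From mathcomp Require Import zify ring.

Set Implicit Arguments.
Unset Strict Implicit.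
Unset Printing Implicit Defensive.

Import GRing.Theory.
Local Open Scope ring_scope.

Lemma leaves_gt0 t : (0 < leaves t)%N.
Proof. by elim: t => //= a Ha b Hb; rewrite addn_gt0 Ha. Qed.

Lemma leaves_le1 t : (leaves t <= 1)%N -> t = Leaf.
Proof. by case: t => //= a b; have := leaves_gt0 a; have := leaves_gt0 b; lia. Qed.

Lemma graft_Leaf D t : graft D t Leaf = D.
Proof. by elim: D t => [|a Ha b Hb] t /=; case: ifP; rewrite ?Ha ?Hb. Qed.

Lemma graft_Node_l a b i C :
  (i <= leaves a)%N -> graft (Node a b) i C = Node (graft a i C) b.
Proof. by move=> /= ->. Qed.

Lemma graft_Node_r a b i C :
  (leaves a < i)%N -> graft (Node a b) i C = Node a (graft b (i - leaves a) C).
Proof. by rewrite /= ltnNge => /negbTE ->. Qed.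

Lemma erase_Node_l a b i :
  (i <= leaves a)%N -> (1 < leaves a)%N -> erase (Node a b) i = Node (erase a i) b.
Proof. by case: a => // a1 a2 /= ->. Qed.

Lemma erase_Node_r a b i :
  (leaves a < i)%N -> (1 < leaves b)%N ->
  erase (Node a b) i = Node a (erase b (i - leaves a)).
Proof. by case: b => // b1 b2; rewrite /= ltnNge => /negbTE ->. Qed.

Lemma erase_Leaf_Node b i : (i <= 1)%N -> erase (Node Leaf b) i = b.
Proof. by move=> /= ->. Qed.

Lemma erase_Node_Leaf a i : (leaves a < i)%N -> erase (Node a Leaf) i = a.
Proof. by rewrite /= ltnNge => /negbTE ->. Qed.

Lemma leaves_graft D t C : (1 <= t <= leaves D)%N ->
  leaves (graft D t C) = (leaves D + leaves C - 1)%N.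
Proof.
elim: D t => [|a Ha b Hb] t /=.
  case/andP=> t_ge1 t_le1; have -> : t = 1%N by lia.
  by rewrite /= addKn.
have := leaves_gt0 a; have := leaves_gt0 b; have := leaves_gt0 C.
by case: ifP => Hta /= *; [rewrite Ha | rewrite Hb]; lia.
Qed.

Lemma leaves_erase c i : (1 < leaves c)%N -> leaves (erase c i) = (leaves c - 1)%N.
Proof.
elim: c i => [|a Ha b Hb] i //= _.
have := leaves_gt0 a; have := leaves_gt0 b.
case: ifP => Hi.
  case: a Ha Hi => [|a1 a2] Ha Hi /=; first lia.
  by rewrite Ha /=; have := leaves_gt0 a1; have := leaves_gt0 a2; lia.
case: b Hb => [|b1 b2] Hb /=; first lia.
by rewrite Hb /=; have := leaves_gt0 b1; have := leaves_gt0 b2; lia.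
Qed.

Lemma erase_graft_in D t C v :
  (1 < leaves C)%N -> (1 <= t <= leaves D)%N -> (1 <= v <= leaves C)%N ->
  erase (graft D t C) (t + v - 1) = graft D t (erase C v).
Proof.
elim: D t => [|a Ha b Hb] t HC Ht Hv.
  have -> : t = 1%N by move: Ht => /=; lia.
  by rewrite /= add1n subn1.
have := leaves_gt0 a; have := leaves_gt0 b; have := leaves_gt0 C => Pc Pb Pa.
rewrite /= in Ht.
have [Hta|Hta] := leqP t (leaves a).
  have Lg : leaves (graft a t C) = (leaves a + leaves C - 1)%N.
    by apply: leaves_graft; lia.
  by rewrite !graft_Node_l // erase_Node_l ?Lg ?Ha //; lia.
have Lg : leaves (graft b (t - leaves a) C) = (leaves b + leaves C - 1)%N.
  by apply: leaves_graft; lia.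
rewrite !graft_Node_r // erase_Node_r ?Lg; [|lia|lia].
by rewrite -Hb; try lia; congr (Node a (erase _ _)); lia.
Qed.

Lemma erase_graft_before D t C u : (1 <= u)%N -> (u < t)%N -> (t <= leaves D)%N ->
  erase (graft D t C) u = graft (erase D u) (t - 1) C.
Proof.
elim: D t u => [|a Ha b Hb] t u Hu Hut HtD; first by move: HtD => /=; lia.
have := leaves_gt0 a; have := leaves_gt0 b; have := leaves_gt0 C => Pc Pb Pa.
rewrite /= in HtD.
have [Hta|Hta] := leqP t (leaves a).
  have Lg : leaves (graft a t C) = (leaves a + leaves C - 1)%N.
    by apply: leaves_graft; lia.
  have Le : leaves (erase a u) = (leaves a - 1)%N by apply: leaves_erase; lia.
  rewrite graft_Node_l // erase_Node_l ?Lg; [|lia|lia].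
  by rewrite erase_Node_l ?graft_Node_l ?Le ?Ha //; lia.
rewrite graft_Node_r //.
have [Hua|Hua] := leqP u (leaves a).
  have [La1|La1] := leqP (leaves a) 1.
    move: Hua Hta; rewrite (leaves_le1 La1) => Hua Hta.
    by rewrite !erase_Leaf_Node.
  have Le : leaves (erase a u) = (leaves a - 1)%N by apply: leaves_erase.
  rewrite !erase_Node_l // graft_Node_r Le; last lia.
  by congr (Node _ (graft b _ C)); lia.
have Lg : leaves (graft b (t - leaves a) C) = (leaves b + leaves C - 1)%N.
  by apply: leaves_graft; lia.
rewrite !erase_Node_r ?Lg; [|lia|lia|lia|lia].
rewrite graft_Node_r ?Hb; [|lia|lia|lia|lia].
by congr (Node a (graft _ _ C)); lia.
Qed.

Lemma erase_graft_after D t C u : (1 <= t)%N -> (t < u)%N -> (u <= leaves D)%N ->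
  erase (graft D t C) (u + leaves C - 1) = graft (erase D u) t C.
Proof.
elim: D t u => [|a Ha b Hb] t u Ht Htu HuD; first by move: HuD => /=; lia.
have := leaves_gt0 a; have := leaves_gt0 b; have := leaves_gt0 C => Pc Pb Pa.
rewrite /= in HuD.
have [Hta|Hta] := leqP t (leaves a).
  have Lg : leaves (graft a t C) = (leaves a + leaves C - 1)%N.
    by apply: leaves_graft; lia.
  rewrite graft_Node_l //.
  have [Hua|Hua] := leqP u (leaves a).
    have Le : leaves (erase a u) = (leaves a - 1)%N by apply: leaves_erase; lia.
    rewrite !erase_Node_l ?Lg; [|lia|lia|lia|lia].
    by rewrite graft_Node_l ?Le ?Ha //; lia.
  have [Lb1|Lb1] := leqP (leaves b) 1.
    by rewrite (leaves_le1 Lb1) !erase_Node_Leaf ?Lg //; lia.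
  rewrite erase_Node_r ?Lg // ?erase_Node_r // ?graft_Node_l //; last lia.
  by congr (Node _ (erase _ _)); lia.
have Lg : leaves (graft b (t - leaves a) C) = (leaves b + leaves C - 1)%N.
  by apply: leaves_graft; lia.
have Le : leaves (erase b (u - leaves a)) = (leaves b - 1)%N.
  by apply: leaves_erase; lia.
rewrite graft_Node_r // !erase_Node_r ?Lg; [|lia|lia|lia|lia].
rewrite graft_Node_r; last lia.
have -> : (u + leaves C - 1 - leaves a = (u - leaves a) + leaves C - 1)%N by lia.
by rewrite Hb; [|lia|lia|lia].
Qed.

Section LinearExtension.
Variables (K : choiceType) (R : comNzRingType) (V : lmodType R).
Implicit Types (F G : K -> V) (f : {malg R[K]}).

Definition linext F f : V := \sum_(c <- msupp f) f@_c *: F c.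

Lemma linextEw F f (d : {fset K}) : (msupp f `<=` d)%fset ->
  linext F f = \sum_(c <- d) f@_c *: F c.
Proof.
move=> le; rewrite /linext (big_fset_incl _ le) //= => c _ /mcoeff_outdom ->.
by rewrite scale0r.
Qed.

Lemma linext_is_linear F : linear (linext F).
Proof.
move=> a f g; pose d := (msupp f `|` msupp g)%fset.
have le_fg : (msupp (a *: f + g) `<=` d)%fset.
  exact: fsubset_trans (msuppD_le _ _) (fsetSU _ (msuppZ_le _ _)).
rewrite (linextEw F le_fg) (linextEw F (fsubsetUl _ (msupp g))).
rewrite (linextEw F (fsubsetUr (msupp f) _)) scaler_sumr -big_split /=.
by apply: eq_bigr => c _; rewrite mcoeffD mcoeffZ scalerDl scalerA.
Qed.

HB.instance Definition _ F :=
  GRing.isLinear.Build R {malg R[K]} V *:%R (linext F) (linext_is_linear F).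

Lemma linextU F a c : linext F << a *g c >> = a *: F c.
Proof. by rewrite (linextEw F msuppU_le) big_seq_fset1 mcoeffUU. Qed.

Lemma linextFD F G f : linext (F \+ G) f = linext F f + linext G f.
Proof. by rewrite /linext -big_split; apply: eq_bigr => c _; rewrite scalerDr. Qed.

Lemma linextFZ a F f : linext (fun c => a *: F c) f = a *: linext F f.
Proof.
by rewrite /linext scaler_sumr; apply: eq_bigr => c _; rewrite !scalerA mulrC.
Qed.

Lemma eq_linext F G : F =1 G -> linext F =1 linext G.
Proof. by move=> eqFG f; apply: eq_bigr => c _; rewrite eqFG. Qed.

End LinearExtension.

Lemma linear_linext (K : choiceType) (R : comNzRingType) (V W : lmodType R)
    (phi : {linear V -> W}) (F : K -> V) f :
  phi (linext F f) = linext (phi \o F) f.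
Proof. by rewrite linear_sum; apply: eq_bigr => c _; rewrite linearZ. Qed.

Lemma linext_malgU (K : choiceType) (R : comNzRingType) (f : {malg R[K]}) :
  linext (fun c => << c >>) f = f.
Proof.
rewrite [RHS]monalgE; apply: eq_bigr => c _.
by apply/malgP => k; rewrite mcoeffZ !mcoeffU mulr_natr.
Qed.

Lemma linearE_malg (K : choiceType) (R : comNzRingType) (V : lmodType R)
    (phi : {linear {malg R[K]} -> V}) f :
  phi f = linext (fun c => phi << c >>) f.
Proof. by rewrite -{1}(linext_malgU f) linear_linext. Qed.

Implicit Types (f g : LQ) (c d e : T2m).

Local Notation bvo := (bv None).
Local Notation bv1 := (bv (Some Leaf)).

Lemma bracketE f g : bracket f g = linext (fun c => linext (brb c) g) f.
Proof.
rewrite /bracket /linext; apply: eq_bigr => c _; rewrite scaler_sumr.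
by apply: eq_bigr => d _; rewrite scalerA.
Qed.

Lemma bracket_is_bilinear : bilinear_for *:%R *:%R bracket.
Proof.
split=> [g | f] a x y /=; rewrite !bracketE ?linearP //.
by rewrite -linextFZ -linextFD; apply: eq_linext => c /=; rewrite linearP.
Qed.

HB.instance Definition _ :=
  bilinear_isBilinear.Build rat LQ LQ LQ *:%R *:%R bracket bracket_is_bilinear.

HB.instance Definition _ f :=
  GRing.isLinear.Build rat LQ LQ *:%R (bracket f) (bracket_is_bilinear.2 f).

Lemma bracket_bv c d : bracket (bv c) (bv d) = brb c d.
Proof. by rewrite bracketE !linextU !scale1r. Qed.

Lemma bracket_antisym f g : bracket g f = - bracket f g.
Proof.
rewrite /bracket exchange_big /= -sumrN; apply: eq_bigr => d _.
rewrite -sumrN; apply: eq_bigr => c _.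
by rewrite /brb -scalerN opprB mulrC.
Qed.

Lemma bracketEl f g : bracket f g = linext (fun c => bracket (bv c) g) f.
Proof. exact: (linearE_malg (applyr bracket g)). Qed.

Lemma bracketEr f g : bracket f g = linext (fun d => bracket f (bv d)) g.
Proof. exact: (linearE_malg (bracket f)). Qed.

Lemma bracket_linextl (F : T2m -> LQ) f g :
  bracket (linext F f) g = linext (fun c => bracket (F c) g) f.
Proof. exact: (linear_linext (applyr bracket g)). Qed.

Lemma bracket_linextr (F : T2m -> LQ) f g :
  bracket f (linext F g) = linext (fun d => bracket f (F d)) g.
Proof. exact: (linear_linext (bracket f)). Qed.

Definition derivation (delta : LQ -> LQ) :=
  forall f g, delta (bracket f g) = bracket (delta f) g + bracket f (delta g).

Lemma derivation_basis (delta : {linear LQ -> LQ}) :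
  (forall c d, delta (brb c d) =
     bracket (delta (bv c)) (bv d) + bracket (bv c) (delta (bv d))) ->
  derivation delta.
Proof.
move=> delta_brb.
suff delta_bv c g : delta (bracket (bv c) g) =
    bracket (delta (bv c)) g + bracket (bv c) (delta g).
  move=> f g; rewrite bracketEl linear_linext [delta f]linearE_malg.
  rewrite bracket_linextl [bracket f _]bracketEl -linextFD.
  by apply: eq_linext => c; apply: delta_bv.
rewrite bracketEr linear_linext [delta g]linearE_malg bracket_linextr.
rewrite [bracket _ g]bracketEr -linextFD; apply: eq_linext => d /=.
by rewrite bracket_bv.
Qed.

Lemma ar_comp c d t : (1 <= t < (ar d).+1)%N ->
  (ar (Defs.comp d t c)).+1 = (ar c + ar d)%N.
Proof.
case: d => [D|] /= Ht; last lia.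
case: c => [C|] /=; first by rewrite leaves_graft; have := leaves_gt0 C; lia.
by case: eqP => /= D1; rewrite ?leaves_erase; lia.
Qed.

Lemma bracket1_bv e : bracket bv1 (bv e) = ((ar e)%:R - 1) *: bv e.
Proof.
rewrite bracket_bv /brb big_nat1 /= scalerBl scale1r.
case: e => [E|] /=; last by rewrite big_geq // scale0r.
under eq_big_nat => t Ht do rewrite graft_Leaf.
by rewrite sumr_const_nat subn1 -scaler_nat.
Qed.

Lemma derivation_bracket1 : derivation (bracket bv1).
Proof.
apply: derivation_basis => c d /=.
have ar_compR c' d' t : (1 <= t < (ar d').+1)%N ->
    (ar (Defs.comp d' t c'))%:R - 1 = (ar c')%:R + (ar d')%:R - 2 :> rat.
  move/(ar_comp c') => ar_ct; apply: (addIr 1).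
  by rewrite -natrD -ar_ct -addn1 natrD; ring.
rewrite !bracket1_bv linearZl_LR linearZ /= bracket_bv -scalerDl.
rewrite {1}/brb (linearB (bracket bv1)) !(linear_sum (bracket bv1)) /=.
under eq_big_nat => t Ht do rewrite bracket1_bv (ar_compR c d t Ht).
under [X in _ - X = _]eq_big_nat => t Ht do rewrite bracket1_bv (ar_compR d c t Ht).
rewrite [(ar d)%:R + _]addrC -!scaler_sumr -scalerBr /brb; congr (_ *: _); ring.
Qed.

Lemma big_nat_shift (R : Type) (idx : R) (op : R -> R -> R) (F : nat -> R)
    m n m' n' a :
  m' = (m + a)%N -> n' = (n + a)%N ->
  \big[op/idx]_(m' <= i < n') F i = \big[op/idx]_(m <= i < n) F (i + a)%N.
Proof. by move=> -> ->; rewrite big_addn addnK. Qed.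

(* The pre-Lie product: [brb c d] is [prelie c d - prelie d c]. *)
Definition prelie c d := \sum_(1 <= t < (ar d).+1) bv (Defs.comp d t c).

Definition partial e := \sum_(1 <= u < (ar e).+1) bv (Defs.comp e u None).

(* [D o_t C] with the [u]-th leaf of [D] erased, for [u != t]. *)
Definition graft_erased D C t u :=
  bv (Some (graft (erase D u) (if (u < t)%N then (t - 1)%N else t) C)).

Lemma partial_graft D C t : (1 <= t <= leaves D)%N ->
  partial (Some (graft D t C)) =
  \sum_(1 <= v < (leaves C).+1)
     bv (Defs.comp (Some D) t (Defs.comp (Some C) v None)) +
  \sum_(1 <= u < (leaves D).+1) (if u == t then 0 else graft_erased D C t u).
Proof.
move=> Ht; have Pc := leaves_gt0 C.
have Lg : leaves (graft D t C) = (leaves D + leaves C - 1)%N by apply: leaves_graft.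
have graft_ne1 : (1 < leaves D + leaves C - 1)%N ->
    (leaves D + leaves C - 1 == 1)%N = false.
  by move=> gt1; apply/eqP; lia.
rewrite /partial /= Lg.
rewrite (@big_cat_nat _ _ _ t) /=; [|lia|lia].
rewrite (@big_cat_nat _ _ _ (t + leaves C)%N _ (leaves D + leaves C - 1).+1) /=;
  [|lia|lia].
rewrite [X in _ = _ + X](@big_cat_nat _ _ _ t) /=; [|lia|lia].
rewrite [X in _ = _ + (_ + X)](@big_cat_nat _ _ _ t.+1) /=; [|lia|lia].
rewrite big_nat1 eqxx add0r.
rewrite (@big_nat_shift _ _ _ _ 1 (leaves C).+1 t (t + leaves C) (t - 1)); [|lia|lia].
rewrite (@big_nat_shift _ _ _ _ t.+1 (leaves D).+1 (t + leaves C)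
  (leaves D + leaves C - 1).+1 (leaves C - 1)); [|lia|lia].
rewrite addrA [X in X + _ = _]addrC -addrA; congr (_ + _).
  apply: eq_big_nat => v Hv.
  have [LC|LC] := leqP (leaves C) 1.
    have EC := leaves_le1 LC; subst C.
    have -> : v = 1%N by lia.
    by rewrite graft_Leaf /= addnK (_ : (1 + (t - 1))%N = t) //; lia.
  have NC : (leaves C == 1)%N = false by apply/eqP; lia.
  rewrite graft_ne1 /= ?NC; last lia.
  by rewrite -erase_graft_in; first (congr (bv (Some (erase _ _))); lia); lia.
congr (_ + _); apply: eq_big_nat => u Hu; rewrite graft_ne1 ?ifF; try lia.
- by rewrite /graft_erased ifT ?erase_graft_before //; lia.
- rewrite /graft_erased ifF; last lia.
  by rewrite -erase_graft_after; first (congr (bv (Some (erase _ _))); lia); lia.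
Qed.

Lemma sum_graft_erased D C u : (1 <= u <= leaves D)%N ->
  \sum_(1 <= t < (leaves D).+1) (if u == t then 0 else graft_erased D C t u) =
  prelie (Some C) (Defs.comp (Some D) u None).
Proof.
move=> Hu; have [LD|LD] := leqP (leaves D) 1.
  have ED := leaves_le1 LD; subst D.
  have -> : u = 1%N by move: Hu => /=; lia.
  by rewrite /= big_nat1 eqxx /prelie /= big_geq.
have Le : leaves (erase D u) = (leaves D - 1)%N by apply: leaves_erase.
have ND : (leaves D == 1%N) = false by apply/eqP; lia.
rewrite /prelie /Defs.comp ND /= Le.
rewrite (@big_cat_nat _ _ _ u) /=; [|lia|lia].
rewrite (@big_cat_nat _ _ _ u.+1 u) /=; [|lia|lia].
rewrite big_nat1 eqxx add0r.
rewrite [RHS](@big_cat_nat _ _ _ u) /=; [|lia|lia].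
rewrite (@big_nat_shift _ _ _ _ u (leaves D - 1).+1 u.+1 (leaves D).+1 1); [|lia|lia].
congr (_ + _); apply: eq_big_nat => t Ht; rewrite /graft_erased.
  by rewrite ifF; [rewrite ifF //|]; apply/negbTE; rewrite ?neq_ltn; lia.
by rewrite ifF ?ifT ?addn1 ?subn1 //; [lia|apply/eqP; lia].
Qed.

Lemma partial_prelie c d :
  \sum_(1 <= t < (ar d).+1) partial (Defs.comp d t c) =
  \sum_(1 <= u < (ar c).+1) prelie (Defs.comp c u None) d +
  \sum_(1 <= u < (ar d).+1) prelie c (Defs.comp d u None).
Proof.
case: d => [D|]; last first.
  rewrite [LHS]big_geq // [X in _ = _ + X]big_geq // addr0 big1 // => u _.
  by rewrite /prelie big_geq.
case: c => [C|]; last by rewrite [X in _ = X + _]big_geq // add0r.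
under eq_big_nat => t Ht do rewrite /= partial_graft //.
rewrite big_split /=; congr (_ + _); first by rewrite exchange_big.
by rewrite exchange_big /=; apply: eq_big_nat => u Hu; apply: sum_graft_erased.
Qed.

Lemma bracketo_bv e : bracket bvo (bv e) = partial e.
Proof. by rewrite bracket_bv /brb [X in _ - X]big_geq // subr0. Qed.

Lemma derivation_bracketo : derivation (bracket bvo).
Proof.
apply: derivation_basis => c d /=.
rewrite !bracketo_bv {1}/brb (linearB (bracket bvo)) !(linear_sum (bracket bvo)) /=.
under eq_bigr => t _ do rewrite bracketo_bv.
under [X in _ - X]eq_bigr => t _ do rewrite bracketo_bv.
rewrite !partial_prelie /partial linear_sumlz (linear_sum (bracket (bv c))) /=.
under [X in _ = X + _]eq_bigr => u _ do rewrite bracket_bv /brb.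
under [X in _ = _ + X]eq_bigr => u _ do rewrite bracket_bv /brb.
rewrite !sumrB [RHS]addrACA -opprD; congr (_ - _); exact: addrC.
Qed.

Lemma bracketoo : bracket bvo bvo = 0.
Proof. by rewrite bracketo_bv /partial big_geq. Qed.

Lemma bracketo1 : bracket bvo bv1 = bvo.
Proof. by rewrite bracketo_bv /partial big_nat1. Qed.

Lemma bracket1o : bracket bv1 bvo = - bvo.
Proof. by rewrite bracket1_bv sub0r scaleN1r. Qed.

Lemma bracket11 : bracket bv1 bv1 = 0.
Proof. by rewrite bracket1_bv subrr scale0r. Qed.

Section LieSubalgebra.
Variable P : LQ -> Prop.
Hypothesis subP : lie_subalgebra P.

Lemma lie_sub0 : P 0. Proof. by case: subP. Qed.

Lemma lie_subD x y : P x -> P y -> P (x + y).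
Proof. by case: subP => _ + _ _; apply. Qed.

Lemma lie_subZ a x : P x -> P (a *: x).
Proof. by case: subP => _ _ + _; apply. Qed.

Lemma lie_sub_bracket x y : P x -> P y -> P (bracket x y).
Proof. by case: subP => _ _ _; apply. Qed.

End LieSubalgebra.

Lemma lie_generated_subalgebra S : lie_subalgebra (lie_generated S).
Proof.
split=> [P /lie_sub0 //| x y Sx Sy P subP SP | a x Sx P subP SP | x y Sx Sy P subP SP].
- exact: lie_subD (Sx P subP SP) (Sy P subP SP).
- exact: lie_subZ (Sx P subP SP).
- exact: lie_sub_bracket (Sx P subP SP) (Sy P subP SP).
Qed.

Lemma lie_generated_base S y : S y -> lie_generated S y.
Proof. by move=> Sy P _; apply. Qed.

Definition adjoin_o1 (H : LQ -> Prop) (x : LQ) :=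
  exists (a b : rat) (h : LQ), H h /\ x = a *: bvo + b *: bv1 + h.

Definition ad_stable (H : LQ -> Prop) (y : LQ) :=
  H (bracket bv1 y) /\ adjoin_o1 H (bracket bvo y).

Section AdjoinUnits.
Variable H : LQ -> Prop.
Hypothesis subH : lie_subalgebra H.
Local Notation V := (adjoin_o1 H).

Lemma adjoin_sub h : H h -> V h.
Proof. by move=> Hh; exists 0, 0, h; rewrite !scale0r !add0r. Qed.

Lemma adjoin_o : V bvo.
Proof.
by exists 1, 0, 0; rewrite scale1r scale0r !addr0; split; first exact: lie_sub0.
Qed.

Lemma adjoin_1 : V bv1.
Proof.
by exists 0, 1, 0; rewrite scale1r scale0r add0r addr0; split; first exact: lie_sub0.
Qed.

Lemma adjoinD x y : V x -> V y -> V (x + y).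
Proof.
move=> [a [b [h [Hh ->]]]] [a' [b' [h' [Hh' ->]]]].
exists (a + a'), (b + b'), (h + h'); split; first exact: lie_subD.
by rewrite !scalerDl [LHS]addrACA (addrACA (a *: _)).
Qed.

Lemma adjoinZ a x : V x -> V (a *: x).
Proof.
move=> [a' [b [h [Hh ->]]]]; exists (a * a'), (a * b), (a *: h).
by rewrite !scalerDr !scalerA; split; first exact: lie_subZ.
Qed.

Lemma adjoinN x : V x -> V (- x).
Proof. by rewrite -scaleN1r; apply: adjoinZ. Qed.

Lemma adjoin_sum (I : Type) (r : seq I) (Q : pred I) (F : I -> LQ) :
  (forall i, Q i -> V (F i)) -> V (\sum_(i <- r | Q i) F i).
Proof.
move=> VF; elim/big_ind: _ => //; last exact: adjoinD.
exact: adjoin_sub (lie_sub0 subH).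
Qed.

Lemma adjoin_bracketr v y : H y -> ad_stable H y -> V v -> V (bracket v y).
Proof.
move=> Hy [H1y Voy] [a [b [h [Hh ->]]]].
rewrite !linearDl !linearZl_LR /=.
apply: adjoinD; last by apply: adjoin_sub; apply: lie_sub_bracket.
by apply: adjoinD; apply: adjoinZ => //; apply: adjoin_sub.
Qed.

Lemma ad_stable0 : ad_stable H 0.
Proof. by rewrite /ad_stable !linear0; split; [|apply: adjoin_sub]; exact: lie_sub0. Qed.

Lemma ad_stableD x y : ad_stable H x -> ad_stable H y -> ad_stable H (x + y).
Proof.
by move=> [H1x Vox] [H1y Voy]; rewrite /ad_stable !linearD; split;
  [apply: lie_subD | apply: adjoinD].
Qed.

Lemma ad_stableZ a x : ad_stable H x -> ad_stable H (a *: x).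
Proof.
by move=> [H1x Vox]; rewrite /ad_stable !linearZ; split;
  [apply: lie_subZ | apply: adjoinZ].
Qed.

Lemma ad_stable_bracket x y : H x -> H y -> ad_stable H x -> ad_stable H y ->
  ad_stable H (bracket x y).
Proof.
move=> Hx Hy stx sty; have [H1x Vox] := stx; have [H1y Voy] := sty; split.
  by rewrite derivation_bracket1; apply: (lie_subD subH); apply: (lie_sub_bracket subH).
rewrite derivation_bracketo; apply: adjoinD; first exact: adjoin_bracketr.
by rewrite bracket_antisym; apply/adjoinN/adjoin_bracketr.
Qed.

Hypothesis stableH : forall h, H h -> ad_stable H h.

Lemma adjoin_bracketo v : V v -> V (bracket bvo v).
Proof.
move=> [a [b [h [Hh ->]]]].
rewrite !linearD !linearZ /= bracketoo bracketo1 scaler0 add0r.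
by apply: adjoinD; [apply/adjoinZ/adjoin_o | case: (stableH Hh)].
Qed.

Lemma adjoin_bracket1 v : V v -> V (bracket bv1 v).
Proof.
move=> [a [b [h [Hh ->]]]].
rewrite !linearD !linearZ /= bracket1o bracket11 scaler0 addr0.
apply: adjoinD; first exact/adjoinZ/adjoinN/adjoin_o.
by apply: adjoin_sub; case: (stableH Hh).
Qed.

Lemma adjoin_subalgebra : lie_subalgebra V.
Proof.
split=> [|||v w Vv [a [b [h [Hh ->]]]]]; [| exact: adjoinD | exact: adjoinZ |].
  by apply: adjoin_sub; apply: lie_sub0.
rewrite !linearD !linearZ /= (bracket_antisym bvo) (bracket_antisym bv1).
apply: adjoinD; last exact: adjoin_bracketr Hh (stableH Hh) Vv.
by apply: adjoinD; apply/adjoinZ/adjoinN;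
  [apply: adjoin_bracketo | apply: adjoin_bracket1].
Qed.

End AdjoinUnits.

Lemma ad_stable_generated S :
  (forall y, S y -> ad_stable (lie_generated S) y) ->
  forall h, lie_generated S h -> ad_stable (lie_generated S) h.
Proof.
move=> stableS h Sh; have subH := lie_generated_subalgebra S.
pose P x := lie_generated S x /\ ad_stable (lie_generated S) x.
suff: P h by case.
apply: Sh => [|y Sy]; last by split; [apply: lie_generated_base | apply: stableS].
split; rewrite /P.
- exact: conj (lie_sub0 subH) (ad_stable0 subH).
- move=> x y [Hx sx] [Hy sy].
  exact: conj (lie_subD subH Hx Hy) (ad_stableD subH sx sy).
- move=> a x [Hx sx].
  exact: conj (lie_subZ subH a Hx) (ad_stableZ subH a sx).
- move=> x y [Hx sx] [Hy sy].
  exact: conj (lie_sub_bracket subH Hx Hy) (ad_stable_bracket subH Hx Hy sx sy).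
Qed.

Lemma ad_stable_tree m t : (2 <= leaves t <= m)%N -> ad_stable (h_gen m) (bv (Some t)).
Proof.
have subH : lie_subalgebra (h_gen m) := lie_generated_subalgebra _.
have gen_tree u : (2 <= leaves u <= m)%N -> h_gen m (bv (Some u)).
  by move=> u_range; apply: lie_generated_base; exists u.
move=> t_range; split.
  by rewrite bracket1_bv; apply: (lie_subZ subH); apply: gen_tree.
have t_ne1 : (leaves t == 1)%N = false by apply/eqP; lia.
rewrite bracketo_bv /partial /= t_ne1; apply: (adjoin_sum subH) => u _.
have leaves_tu : leaves (erase t u) = (leaves t - 1)%N by apply: leaves_erase; lia.
have [t_le2|t_gt2] := leqP (leaves t) 2.
  by rewrite (@leaves_le1 (erase t u)); [apply: (adjoin_1 subH) | lia].
by apply: adjoin_sub; apply: gen_tree; lia.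
Qed.

Theorem lemma5p4 (m : nat) (hm : (2 <= m)%N) :
  lie_subalgebra (fun x : LQ =>
    exists (a b : rat) (h : LQ),
      h_gen m h /\ x = a *: bv None + b *: bv (Some Leaf) + h).
Proof.
apply: (@adjoin_subalgebra (h_gen m)); first exact: lie_generated_subalgebra.
by apply: ad_stable_generated => _ [t [t_range ->]]; apply: ad_stable_tree.
Qed.
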